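(* Let $\mathcal{G}$ be an infinite connected graph with finite maximum degree $d_{\max}$, and let $H$ be its Hashimoto (non-backtracking) matrix, with $\rho\equiv\rho_{l^2}(H)$. Consider site percolation on $\mathcal{G}$ with open-vertex probability $p$. If $p<1/\rho$, then there exist a base $\rho'<1$ and a constant $C\ge d_{\max}(1-p\rho)^{-1}$ such that for every pair of vertices $u,v$ of $\mathcal{G}$, $$\tau_{u,v}\le C\,(\rho')^{d(u,v)},$$ where $d(u,v)$ is the graph distance.
   Context: For a graph $\mathcal{G}$ with vertex set $\mathcal{V}$ and edge set $\mathcal{E}$, let $\mathcal{A}(\mathcal{G})$ be the set of arcs (directed edges; each undirected edge gives two mutually reverse arcs). The Hashimoto matrix $H$ is indexed by $\mathcal{A}\times\mathcal{A}$, with $H_{a,b}=1$ iff the head of $a$ coincides with the tail of $b$ and $b$ is not the reverse of $a$, and $H_{a,b}=0$ otherwise (it is the adjacency matrix of the oriented line graph of $\mathcal{G}$). $\rho_{l^2}(H)$ denotes the spectral radius of $H$ viewed as an operator on $l^2(\mathcal{A})$, i.e. $\rho_{l^2}(H)=\lim_{m\to\infty}\|H^m\|_2^{1/m}$. In site percolation each vertex is independently open with probability $p$; $\mathcal{C}(v)$ is the connected component containing $v$ of the subgraph induced by open vertices ($\mathcal{C}(v)=\emptyset$ if $v$ is closed). The connectivity is $\tau_{u,v}=\mathbb{P}(u\in\mathcal{C}(v))$. *)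

From HB Require Import structures.
From mathcomp Require Import all_boot all_order all_algebra.
From mathcomp Require Import all_classical all_reals all_analysis.
Set Implicit Arguments. Unset Strict Implicit. Unset Printing Implicit Defensive.
Import Order.TTheory GRing.Theory Num.Theory.
Local Open Scope classical_set_scope.
Local Open Scope ring_scope.

Section Graph.
Variable V : choiceType.
(* A locally finite simple graph is given by its neighbour lists. *)
Variable nb : V -> seq V.

Definition simple_graph : Prop :=
  (forall x, uniq (nb x)) /\ (forall x, x \notin nb x) /\
  (forall x y, (y \in nb x) = (x \in nb y)).

Definition adj (x y : V) : bool := y \in nb x.

Definition infinite_graph : Prop := forall s : seq V, exists x, x \notin s.

(* walk from u of length (size s) ending at v *)
Definition walk (u v : V) (s : seq V) : Prop := path adj u s /\ last u s = v.

Definition connected_graph : Prop := forall u v, exists s, walk u v s.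

Definition is_dist (u v : V) (n : nat) : Prop :=
  (exists s, walk u v s /\ size s = n) /\
  (forall s, walk u v s -> (n <= size s)%N).

Definition max_degree (dmax : nat) : Prop :=
  (forall x, (size (nb x) <= dmax)%N) /\ exists x, size (nb x) = dmax.

(* arcs = ordered pairs (tail, head) of adjacent vertices *)
Definition is_arc (a : V * V) : bool := adj a.1 a.2.

Variable R : realType.

Definition hashimoto (a b : V * V) : R :=
  ((is_arc a && is_arc b && (a.2 == b.1) && (b != (a.2, a.1))%B)%:R).

(* entries of H^m: (H^(m+1))_{a,b} = sum_c H_{a,c} (H^m)_{c,b}, where the
   sum ranges over the (finitely many) arcs c that can follow a, i.e. the
   arcs out of the head of a; H_{a,c} = 0 for every other c. *)
Fixpoint hashimoto_pow (m : nat) (a b : V * V) : R :=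
  match m with
  | 0 => (is_arc a && (a == b))%:R
  | m'.+1 => \sum_(c <- [seq (a.2, z) | z <- nb a.2])
               hashimoto a c * hashimoto_pow m' c b
  end.

Definition arc_seq (s : seq (V * V)) : bool := uniq s && all is_arc s.

Definition l2sq (g : V * V -> R) : R :=
  sup [set \sum_(a <- t) g a ^+ 2 | t in [set t | arc_seq t]].

Definition hpow_apply (m : nat) (s : seq (V * V)) (f : V * V -> R) :=
  fun a => \sum_(b <- s) hashimoto_pow m a b * f b.

(* operator norm of H^m on l^2(A), computed on the dense subspace of
   finitely supported vectors *)
Definition hpow_norm (m : nat) : R :=
  sup [set r : R | exists (s : seq (V * V)) (f : V * V -> R),
         [/\ arc_seq s, \sum_(b <- s) f b ^+ 2 <= 1 &
             r = Num.sqrt (l2sq (hpow_apply m s f))]].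

Definition hashimoto_rho : R :=
  limn (fun m : nat => hpow_norm m `^ (m%:R)^-1).

End Graph.

Section Percolation.
Local Open Scope ereal_scope.
Variables (V : choiceType) (R : realType) (d : measure_display)
  (Omega : measurableType d).

(* omega x w = true iff vertex x is open in configuration w;
   site percolation with parameter p: the events {x open} are measurable
   and the family (omega x)_x is i.i.d. Bernoulli(p), i.e. the product rule
   holds for every finite set of vertices. *)
Definition site_percolation (P : probability Omega R) (omega : V -> Omega -> bool)
  (p : R) : Prop :=
  (forall x, measurable [set w | omega x w]) /\
  (forall (s : seq V) (b : V -> bool), uniq s ->
     P [set w | all (fun x => omega x w == b x) s] =
     (\prod_(x <- s) (if b x then p else 1 - p)%R)%:E).

(* the event {u in C(v)}: an open walk from v to u (u, v themselves open) *)
Definition in_cluster (nb : V -> seq V) (omega : V -> Omega -> bool)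
  (u v : V) : set Omega :=
  [set w | exists s, walk nb v u s /\ all (fun x => omega x w) (v :: s)].

End Percolation.

(* A self-avoiding walk of length k + 1 from v to u is non-backtracking, i.e. it
   is a path of length k of the Hashimoto matrix H from an arc out of v to an arc
   into u. So the number of such walks is a sum of entries of H^k over at most
   dmax^2 pairs of arcs, which Cauchy-Schwarz bounds by dmax ||H^k||. The norms
   ||H^k|| are submultiplicative, hence by Fekete's lemma ||H^k|| <= M y^k for
   every y > rho. If u lies in the open cluster of v, some self-avoiding walk from
   v to u, of length k >= d(u, v), is open, which has probability p^(k+1). The
   union bound and p y < 1 give a geometric tail of order (p y)^d(u, v). *)

From HB Require Import structures.
From mathcomp Require Import all_boot all_order all_algebra.
From mathcomp Require Import all_classical all_reals all_analysis.
From mathcomp Require Import ring lra.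
Import Order.TTheory GRing.Theory Num.Theory.
Local Open Scope classical_set_scope.
Local Open Scope ring_scope.

Set Implicit Arguments. Unset Strict Implicit. Unset Printing Implicit Defensive.

Lemma weighted_cauchy_schwarz (R : realDomainType) (I : Type) (l : seq I)
    (w x : I -> R) : (forall i, 0 <= w i) ->
  (\sum_(i <- l) w i * x i) ^+ 2 <=
  (\sum_(i <- l) w i) * \sum_(i <- l) w i * x i ^+ 2.
Proof.
move=> w_ge0.
set A := \sum_(i <- l) w i; set B := \sum_(i <- l) w i * x i.
set C := \sum_(i <- l) w i * x i ^+ 2.
have lagrange : \sum_(i <- l) \sum_(j <- l) w i * w j * (x i - x j) ^+ 2
    = (A * C - B ^+ 2) *+ 2.
  rewrite (eq_bigr (fun i => w i * x i ^+ 2 * A + w i * C - w i * x i * B *+ 2))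
    => [|i _]; last first.
    rewrite (eq_bigr (fun j => w i * x i ^+ 2 * w j + w i * (w j * x j ^+ 2)
      - w i * x i * (w j * x j) *+ 2)) => [|j _]; last by ring.
    by rewrite sumrB big_split /= sumrMnl -!mulr_sumr.
  by rewrite sumrB big_split /= sumrMnl -!mulr_suml -/A -/B -/C; ring.
have : 0 <= \sum_(i <- l) \sum_(j <- l) w i * w j * (x i - x j) ^+ 2.
  apply: sumr_ge0 => i _; apply: sumr_ge0 => j _.
  by rewrite mulr_ge0 ?sqr_ge0 ?mulr_ge0 ?w_ge0.
by rewrite lagrange pmulrn_lge0 // subr_ge0.
Qed.

Lemma sumr1_seq (R : pzSemiRingType) (I : Type) (l : seq I) :
  \sum_(i <- l) (1 : R) = (size l)%:R.
Proof. by rewrite -sum1_size natr_sum. Qed.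

Lemma cauchy_schwarz_seq (R : realDomainType) (I : Type) (l : seq I) (x : I -> R) :
  (\sum_(i <- l) x i) ^+ 2 <= (size l)%:R * \sum_(i <- l) x i ^+ 2.
Proof.
have := weighted_cauchy_schwarz l x (fun=> ler01).
rewrite -sumr1_seq.
by under eq_bigr do rewrite mul1r; under [X in _ <= _ * X]eq_bigr do rewrite mul1r.
Qed.

Lemma bernoulli_inequality (R : realDomainType) (x : R) m :
  0 <= x -> 1 + m%:R * x <= (1 + x) ^+ m.
Proof.
move=> x_ge0; elim: m => [|m IH]; first by rewrite mul0r addr0 expr0.
have : (1 + x) * (1 + m%:R * x) <= (1 + x) ^+ m.+1.
  by rewrite exprS ler_wpM2l // addr_ge0.
have : 0 <= m%:R * x * x by rewrite !mulr_ge0.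
rewrite -natr1; nra.
Qed.

Lemma exists_gt_mul_lt1 (R : realFieldType) (p r : R) : 0 <= p -> p * r < 1 ->
  exists2 y, r < y & p * y < 1.
Proof.
move=> p_ge0 pr_lt1; pose q := (1 - p * r) / (p + 1).
have q_gt0 : 0 < q by rewrite divr_gt0 ?subr_gt0 // ltr_wpDl.
have qE : q * (p + 1) = 1 - p * r by rewrite divfK // gt_eqF // ltr_wpDl.
by exists (r + q); [rewrite ltrDl | nra].
Qed.

Lemma sum_seq_delta (T : eqType) (R : ringType) (l : seq T) (F : T -> R) b :
  uniq l -> (F b != 0 -> b \in l) -> \sum_(c <- l) (c == b)%:R * F c = F b.
Proof.
move=> l_uniq Fb_l; have [b_l|b_notl] := boolP (b \in l).
  rewrite (bigD1_seq b) //= eqxx mul1r big1 ?addr0 // => c /negbTE ->.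
  by rewrite mul0r.
rewrite big_seq big1 => [|c c_l]; last first.
  by rewrite (_ : c == b = false) ?mul0r //; apply: contraNF b_notl => /eqP <-.
by apply/eqP; rewrite eq_sym; exact: contraNT Fb_l b_notl.
Qed.

Lemma sum_count_eq_le (T : Type) (A : eqType) (P : pred T) (f : T -> A)
    (L : seq T) (s : seq A) :
  uniq s -> (\sum_(b <- s) count (fun t => P t && (f t == b)) L <= count P L)%N.
Proof.
move=> s_uniq; elim: L => [|t L IH] /=; first by rewrite big1.
rewrite big_split /= leq_add //; case: (P t) => /=; last by rewrite big1.
rewrite (eq_bigr (fun b => (f t == b) : nat)) => [|b _]; last by case: eqP.
rewrite -big_mkcond sum1_count (eq_count (a2 := pred1 (f t))) => [|b]; last first.
  by rewrite /= eq_sym.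
by rewrite count_uniq_mem // leq_b1.
Qed.

Lemma count_le_sum_count (T : eqType) (A : eqType) (P : pred T) (Q : A -> pred T)
    (L : seq T) (s : seq A) : uniq s ->
  (forall t, t \in L -> P t -> exists2 w, w \in s & Q w t) ->
  (count P L <= \sum_(w <- s) count (Q w) L)%N.
Proof.
move=> s_uniq; elim: L => [|t L IH] /= PQ; first by rewrite big1.
rewrite big_split /= leq_add ?IH // => [|t' t'L]; last by apply: PQ; rewrite inE t'L orbT.
case Pt: (P t) => //; have [w ws Qwt] := PQ t (mem_head _ _) Pt.
by rewrite (bigD1_seq w) //= Qwt.
Qed.

Section GeometricSeries.
Variable R : realType.
Local Open Scope ereal_scope.

Lemma nneseries_geometric_le (a r : R) : (0 <= a)%R -> (0 <= r < 1)%R ->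
  \sum_(k <oo) (a * r ^+ k)%:E <= (a / (1 - r))%:E.
Proof.
move=> a_ge0 /andP[r_ge0 r_lt1]; apply: lime_le.
  by apply: is_cvg_nneseries => k _ _; rewrite lee_fin mulr_ge0 ?exprn_ge0.
apply: nearW => N; rewrite sumEFin lee_fin.
have := congr1 (fun u => u N) (geometric_seriesE a (negbT (lt_eqF r_lt1))).
rewrite seriesEnat /= => ->.
rewrite ler_pM2r ?invr_gt0 ?subr_gt0 // -[leRHS]mulr1 ler_wpM2l //.
by rewrite gerBl exprn_ge0.
Qed.

Lemma nneseries_geometric_tail_le (u : nat -> \bar R) n (a r : R) :
  (0 <= a)%R -> (0 <= r < 1)%R -> (forall k, 0 <= u k) ->
  (forall k, (k < n)%N -> u k = 0) ->
  (forall k, (n <= k)%N -> u k <= (a * r ^+ k)%:E) ->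
  \sum_(k <oo) u k <= (a * r ^+ n / (1 - r))%:E.
Proof.
move=> a_ge0 r01 u_ge0 u_head u_tail.
rewrite (@nneseries_split _ _ 0 n) // add0n big_nat big1 ?add0e => [|k /andP[_]];
  last exact: u_head.
rewrite -nneseries_addn //.
apply: le_trans (nneseries_geometric_le _ r01); last first.
  by rewrite mulr_ge0 ?exprn_ge0 //; case/andP: r01.
apply: lee_nneseries => [k _ _|k _]; first exact: u_ge0.
by rewrite -mulrA -exprD [(n + k)%N]addnC; apply: u_tail; rewrite leq_addl.
Qed.

End GeometricSeries.

(** * Fekete's lemma for submultiplicative sequences *)

Section Fekete.
Variables (R : realType) (a : nat -> R).
Hypothesis a_ge0 : forall m, 0 <= a m.
Hypothesis a_submul : forall m n, a (m + n) <= a m * a n.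

Lemma submul_le_expr q k r : a (q * k + r) <= a k ^+ q * a r.
Proof.
elim: q => [|q IH]; first by rewrite mul0n add0n expr0 mul1r.
rewrite mulSn -addnA exprS -mulrA.
by apply: le_trans (a_submul _ _) _; rewrite ler_wpM2l.
Qed.

(* Write m = q k + r with r < k: then a m <= (y^k)^q a r, and the finitely many
   a r, r < k, are absorbed into M. *)
Lemma submul_le_geometric_of_le y k : 0 < y -> (0 < k)%N -> a k <= y ^+ k ->
  exists2 M, 0 < M & forall m, a m <= M * y ^+ m.
Proof.
move=> y_gt0 k_gt0 aky.
have term_ge0 (r : 'I_k) : 0 <= a r / y ^+ r.
  by rewrite divr_ge0 ?a_ge0 ?exprn_ge0 ?ltW.
exists (1 + \sum_(r < k) a r / y ^+ r) => [|m].
  by rewrite ltr_pwDl ?sumr_ge0.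
have r_lt_k : (m %% k < k)%N by rewrite ltn_pmod.
rewrite (divn_eq m k) exprD mulrCA.
apply: le_trans (submul_le_expr _ _ _) _.
apply: ler_pM; rewrite ?exprn_ge0 ?a_ge0 //.
  by rewrite mulnC exprM lerXn2r ?nnegrE ?exprn_ge0 ?a_ge0 // ltW.
rewrite -ler_pdivrMr ?exprn_gt0 //; apply: ler_wpDl => //.
by rewrite (bigD1 (Ordinal r_lt_k)) //= lerDl sumr_ge0.
Qed.

Let root m := a m `^ (m%:R)^-1.
Let roots := [set root m | m in [set m | (0 < m)%N]].
Let L := inf roots.

Let root_ge0 m : 0 <= root m. Proof. exact: powR_ge0. Qed.

Let expr_root m : (0 < m)%N -> root m ^+ m = a m.
Proof.
move=> m_gt0; rewrite -powR_mulrn ?powR_ge0 // -powRrM mulVf ?powRr1 //.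
by rewrite pnatr_eq0 -lt0n.
Qed.

Let root_le m z : (0 < m)%N -> 0 <= z -> a m <= z ^+ m -> root m <= z.
Proof.
move=> m_gt0 z_ge0 amz.
by rewrite -(ler_pXn2r m_gt0) ?nnegrE ?root_ge0 ?expr_root.
Qed.

Let roots_lbound : has_lbound roots.
Proof. by exists 0 => _ [m _ <-]. Qed.

Let L_ge0 : 0 <= L.
Proof. by apply: lb_le_inf => [|_ [m _ <-]]; first by exists (root 1), 1%N. Qed.

Let L_le_root m : (0 < m)%N -> L <= root m.
Proof. by move=> m_gt0; apply: ge_inf roots_lbound _ _; exists m. Qed.

Let le_geometric_of_gt_L y : L < y ->
  exists2 M, 0 < M & forall m, a m <= M * y ^+ m.
Proof.
move=> Ly; have y_gt0 : 0 < y by apply: le_lt_trans L_ge0 Ly.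
have roots_inf : has_inf roots by split; [exists (root 1), 1%N | exact: roots_lbound].
have := @inf_adherent _ roots (y - L).
rewrite subr_gt0 subrKC => /(_ Ly roots_inf) [_ [k k_gt0 <-] rootk].
apply: (submul_le_geometric_of_le y_gt0 k_gt0).
by rewrite -expr_root //; apply: lerXn2r; rewrite ?nnegrE ?root_ge0 ?ltW.
Qed.

Let root_cvg : root @ \oo --> L.
Proof.
apply/cvgrPdist_le => e e_gt0.
pose y := L + e / 2.
have Ly : L < y by rewrite ltrDl divr_gt0.
have y_gt0 : 0 < y := le_lt_trans L_ge0 Ly.
have [M M_gt0 aM] := le_geometric_of_gt_L Ly.
pose d := e / 2 / y.
have d_gt0 : 0 < d by rewrite !divr_gt0.
have yd : y * (1 + d) = L + e.
  by rewrite mulrDr mulr1 /d mulrCA mulfV ?gt_eqF // mulr1 /y -addrA -splitr.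
(* Eventually M < 1 + m d <= (1 + d)^m, so a m <= (y (1 + d))^m = (L + e)^m. *)
apply: filterS (nbhs_infty_ge (Num.trunc (M / d)).+1) => m m_large.
have m_gt0 : (0 < m)%N by apply: leq_trans m_large.
have Md : M < m%:R * d.
  by rewrite -ltr_pdivrMr // (lt_le_trans (truncnS_gt _)) // ler_nat.
rewrite distrC ger0_norm ?subr_ge0 ?L_le_root // lerBlDl.
apply: root_le => //; first by rewrite addr_ge0 // ltW.
rewrite -yd exprMn mulrC; apply: le_trans (aM m) _.
rewrite ler_wpM2r ?exprn_ge0 ?(ltW y_gt0) //.
apply: le_trans (bernoulli_inequality _ (ltW d_gt0)).
lra.
Qed.

Lemma limn_submul_root_ge0 : 0 <= limn (fun m => a m `^ (m%:R)^-1).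
Proof. by rewrite (cvg_lim _ root_cvg). Qed.

Lemma submul_le_geometric y : limn (fun m => a m `^ (m%:R)^-1) < y ->
  exists2 M, 0 < M & forall m, a m <= M * y ^+ m.
Proof. by rewrite (cvg_lim _ root_cvg) //; exact: le_geometric_of_gt_L. Qed.

End Fekete.

(** * Non-backtracking walks and the Hashimoto matrix *)

Section NonBacktrackingWalks.
Variables (V : choiceType) (nb : V -> seq V) (R : realType).
Hypothesis nb_simple : simple_graph nb.

Notation H := (hashimoto nb R).
Notation Hpow := (hashimoto_pow nb R).

Fixpoint walks_from (k : nat) (x : V) : seq (seq V) :=
  if k is k'.+1 then flatten [seq map (cons z) (walks_from k' z) | z <- nb x]
  else [:: [::]].

Lemma mem_walks_from k x s :
  (s \in walks_from k x) = path (adj nb) x s && (size s == k).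
Proof.
elim: k x s => [|k IH] x s; first by case: s => //= z s; rewrite andbF.
apply/flatten_mapP/idP => [[z xz /mapP[s' s'_in ->]]|].
  by move: s'_in; rewrite IH /= => /andP[-> /eqP ->]; rewrite /adj xz eqxx.
case: s => [|z s] //= /andP[/andP[xz zs] /eqP[size_s]].
by exists z => //; apply/mapP; exists s; rewrite // IH zs size_s eqxx.
Qed.

(* [non_backtracking x y s] and [last_arc x y s] read [s] as the continuation
   of a walk whose first arc is (x, y). *)
Fixpoint non_backtracking (x y : V) (s : seq V) : bool :=
  if s is z :: s' then (z != x) && non_backtracking y z s' else true.

Fixpoint last_arc (x y : V) (s : seq V) : V * V :=
  if s is z :: s' then last_arc y z s' else (x, y).

Lemma adj_sym x y : adj nb x y = adj nb y x.
Proof. by case: nb_simple => _ [_ sym]; rewrite /adj sym. Qed.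

Lemma hashimoto_out x y z : adj nb x y -> z \in nb y ->
  H (x, y) (y, z) = (z != x)%:R.
Proof.
by move=> xy yz; rewrite /hashimoto /is_arc /= xy /adj yz eqxx xpair_eqE eqxx.
Qed.

Lemma hashimoto_pow_count m x y b : adj nb x y ->
  Hpow m (x, y) b =
  (count (fun s => non_backtracking x y s && (last_arc x y s == b))
         (walks_from m y))%:R.
Proof.
elim: m x y b => [|m IH] x y b xy /=; first by rewrite /is_arc /= xy addn0.
rewrite count_flatten sumnE !big_map natr_sum; apply: eq_big_seq => z yz.
rewrite count_map hashimoto_out // (IH _ _ _ yz) /preim /=.
case: (z != x); first by rewrite mul1r.
by rewrite mul0r (@eq_count _ _ pred0) ?count_pred0.
Qed.

Definition rev_arc (a : V * V) : V * V := (a.2, a.1).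
Definition out_arcs (y : V) : seq (V * V) := [seq (y, z) | z <- nb y].
Definition in_arcs (y : V) : seq (V * V) := [seq (w, y) | w <- nb y].

Lemma rev_arcK : involutive rev_arc. Proof. by case. Qed.

Lemma rev_arc_inj : injective rev_arc. Proof. exact: inv_inj rev_arcK. Qed.

Lemma is_arc_rev a : is_arc nb (rev_arc a) = is_arc nb a.
Proof. by case: a => x y; rewrite /is_arc adj_sym. Qed.

Lemma uniq_out_arcs y : uniq (out_arcs y).
Proof. by rewrite map_inj_uniq; [case: nb_simple | move=> ? ? []]. Qed.

Lemma uniq_in_arcs y : uniq (in_arcs y).
Proof. by rewrite map_inj_uniq; [case: nb_simple | move=> ? ? []]. Qed.

Lemma arc_seq_out_arcs y : arc_seq nb (out_arcs y).
Proof. by rewrite /arc_seq uniq_out_arcs; apply/allP => _ /mapP[z yz ->]. Qed.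

Lemma arc_seq_in_arcs y : arc_seq nb (in_arcs y).
Proof.
rewrite /arc_seq uniq_in_arcs; apply/allP => _ /mapP[w yw ->].
by rewrite /is_arc adj_sym.
Qed.

Lemma in_arcsE y : in_arcs y = map rev_arc (out_arcs y).
Proof. by rewrite -map_comp. Qed.

Lemma hashimoto_pow_ge0 m a b : 0 <= Hpow m a b.
Proof.
elim: m a => [|m IH] a /=; first exact: ler0n.
by apply: sumr_ge0 => c _; rewrite mulr_ge0 ?IH ?ler0n.
Qed.

Lemma hashimoto_rev a c : H (rev_arc c) (rev_arc a) = H a c.
Proof.
case: a c => [x y] [z w]; rewrite /hashimoto.
rewrite !is_arc_rev /= [is_arc nb (z, w) && _]andbC [z == y]eq_sym.
by rewrite [(y, x) == _]eq_sym.
Qed.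

Lemma hashimoto_pow_arc m a b : Hpow m a b != 0 -> is_arc nb a.
Proof.
case: m => [|m] /=; first by case: (is_arc nb a) => //=; rewrite eqxx.
apply: contraTT => /negbTE not_arc; apply/negPn/eqP/big1 => c _.
by rewrite /hashimoto not_arc mul0r.
Qed.

Lemma hashimoto_neq0 a c : H a c != 0 ->
  [/\ is_arc nb a, is_arc nb c, a.2 = c.1 & c != rev_arc a].
Proof.
move=> Hac; have : [&& is_arc nb a, is_arc nb c, a.2 == c.1 & c != rev_arc a].
  by move: Hac; rewrite /hashimoto -!andbA; case: (_ && _) => //; rewrite eqxx.
by case/and4P => -> -> /eqP -> ->.
Qed.

Lemma hashimoto_out_arcs a c : H a c != 0 -> c \in out_arcs a.2.
Proof. by case/hashimoto_neq0 => _ c_arc -> _; apply/mapP; exists c.2; case: c c_arc. Qed.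

Lemma hashimoto_in_arcs a c : H a c != 0 -> a \in in_arcs c.1.
Proof.
case/hashimoto_neq0 => a_arc _ <- _; apply/mapP; exists a.1; last by case: a a_arc.
by move: a_arc; rewrite /is_arc adj_sym.
Qed.

Lemma hashimoto_powS m a b :
  Hpow m.+1 a b = \sum_(c <- out_arcs a.2) H a c * Hpow m c b.
Proof. by []. Qed.

Lemma hashimoto_pow1 a b : Hpow 1 a b = H a b.
Proof.
rewrite hashimoto_powS -[RHS](@sum_seq_delta _ _ (out_arcs a.2) (H a) b);
  [|exact: uniq_out_arcs|exact: hashimoto_out_arcs].
apply: eq_bigr => c _; rewrite mulrC /=.
have [->|] := eqP; last by rewrite andbF.
case b_arc: (is_arc nb b); first by [].
suff -> : H a b = 0 by rewrite !mulr0.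
by apply/eqP; apply: contraFT b_arc => /hashimoto_neq0[].
Qed.

Lemma hashimoto_powSr m a b :
  Hpow m.+1 a b = \sum_(c <- in_arcs b.1) Hpow m a c * H c b.
Proof.
elim: m a => [|m IH] a.
  rewrite hashimoto_pow1 -[LHS](@sum_seq_delta _ _ (in_arcs b.1) (H^~ b) a);
    [|exact: uniq_in_arcs|exact: hashimoto_in_arcs].
  apply: eq_bigr => c _ /=; rewrite eq_sym.
  have [->|] := eqP; last by rewrite andbF.
  case c_arc: (is_arc nb c); first by [].
  suff -> : H c b = 0 by rewrite !mulr0.
  by apply/eqP; apply: contraFT c_arc => /hashimoto_neq0[].
rewrite hashimoto_powS; under eq_bigr do rewrite IH mulr_sumr.
rewrite exchange_big /=; apply: eq_bigr => c _.
by rewrite mulr_suml; apply: eq_bigr => e _; rewrite mulrA.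
Qed.

Lemma hashimoto_pow_rev m a b : Hpow m a b = Hpow m (rev_arc b) (rev_arc a).
Proof.
elim: m a b => [|m IH] a b.
  rewrite /= (inj_eq rev_arc_inj) is_arc_rev eq_sym.
  by case: eqP => [->|]; rewrite ?andbF.
rewrite hashimoto_powSr in_arcsE big_map; apply: eq_bigr => c _.
have -> : H (rev_arc c) b = H (rev_arc b) c by rewrite -[RHS]hashimoto_rev rev_arcK.
by rewrite IH rev_arcK mulrC.
Qed.


Variable dmax : nat.
Hypothesis deg_le : forall x, (size (nb x) <= dmax)%N.

Lemma size_walks_from k x : (size (walks_from k x) <= dmax ^ k)%N.
Proof.
elim: k x => [|k IH] x //=.
rewrite size_flatten /shape -map_comp sumnE big_map.
apply: (@leq_trans (\sum_(z <- nb x) dmax ^ k)).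
  by apply: leq_sum => z _; rewrite /= size_map IH.
by rewrite big_const_seq count_predT iter_addn_0 expnS mulnC leq_mul2r deg_le orbT.
Qed.

Lemma hashimoto_pow_row_sum_le m a s : uniq s ->
  \sum_(b <- s) Hpow m a b <= dmax%:R ^+ m.
Proof.
move=> s_uniq; case a_arc: (is_arc nb a); last first.
  rewrite big1 ?exprn_ge0 // => b _; apply/eqP; apply: contraFT a_arc.
  exact: hashimoto_pow_arc.
case: a a_arc => x y xy.
under eq_bigr do rewrite hashimoto_pow_count //.
rewrite -natr_sum -natrX ler_nat.
apply: leq_trans (sum_count_eq_le _ _ _ s_uniq) _.
exact: leq_trans (count_size _ _) (size_walks_from m y).
Qed.

Lemma hashimoto_pow_col_sum_le m b t : uniq t ->
  \sum_(a <- t) Hpow m a b <= dmax%:R ^+ m.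
Proof.
move=> t_uniq; under eq_bigr do rewrite hashimoto_pow_rev.
rewrite -(big_map rev_arc predT (Hpow m (rev_arc b))).
by apply: hashimoto_pow_row_sum_le; rewrite map_inj_uniq //; exact: rev_arc_inj.
Qed.

(* Schur test: Cauchy-Schwarz weighted by the rows of H^m, then the bounds on the
   row and column sums. *)
Lemma hashimoto_pow_schur m s t (f : V * V -> R) : uniq s -> uniq t ->
  \sum_(a <- t) (\sum_(b <- s) Hpow m a b * f b) ^+ 2
  <= (dmax%:R ^+ m) ^+ 2 * \sum_(b <- s) f b ^+ 2.
Proof.
move=> s_uniq t_uniq; set D := dmax%:R ^+ m.
have D_ge0 : 0 <= D by rewrite exprn_ge0.
apply: (@le_trans _ _ (\sum_(a <- t) D * \sum_(b <- s) Hpow m a b * f b ^+ 2)).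
  apply: ler_sum => a _.
  apply: le_trans (weighted_cauchy_schwarz s f (hashimoto_pow_ge0 m a)) _.
  apply: ler_wpM2r; last exact: hashimoto_pow_row_sum_le.
  by apply: sumr_ge0 => b _; rewrite mulr_ge0 ?hashimoto_pow_ge0 ?sqr_ge0.
rewrite -mulr_sumr expr2 -mulrA ler_wpM2l // exchange_big mulr_sumr.
apply: ler_sum => b _; rewrite -mulr_suml ler_wpM2r ?sqr_ge0 //.
exact: hashimoto_pow_col_sum_le.
Qed.

(** * The l^2 norms of the powers of H *)

Lemma l2sq_le (g : V * V -> R) B :
  (forall t, arc_seq nb t -> \sum_(a <- t) g a ^+ 2 <= B) -> l2sq nb g <= B.
Proof.
move=> gB; apply: ge_sup => [|_ [t t_arcs <-]]; last exact: gB.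
by exists 0, [::]; rewrite ?big_nil.
Qed.

Lemma le_l2sq (g : V * V -> R) B t :
  (forall t, arc_seq nb t -> \sum_(a <- t) g a ^+ 2 <= B) -> arc_seq nb t ->
  \sum_(a <- t) g a ^+ 2 <= l2sq nb g.
Proof.
move=> gB t_arcs; apply: sup_upper_bound; last by exists t.
split; first by exists 0, [::]; rewrite ?big_nil.
by exists B => _ [u u_arcs <-]; exact: gB.
Qed.

Lemma hpow_apply_schur m s t (f : V * V -> R) : arc_seq nb s -> arc_seq nb t ->
  \sum_(a <- t) hpow_apply nb m s f a ^+ 2
  <= (dmax%:R ^+ m) ^+ 2 * \sum_(b <- s) f b ^+ 2.
Proof. by case/andP => s_uniq _ /andP[t_uniq _]; exact: hashimoto_pow_schur. Qed.

Lemma sum_hpow_apply_le_l2sq m s t (f : V * V -> R) :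
  arc_seq nb s -> arc_seq nb t ->
  \sum_(a <- t) hpow_apply nb m s f a ^+ 2 <= l2sq nb (hpow_apply nb m s f).
Proof. by move=> s_arcs; apply: le_l2sq => u; exact: hpow_apply_schur. Qed.

Lemma l2sq_hpow_apply_ge0 m s (f : V * V -> R) :
  arc_seq nb s -> 0 <= l2sq nb (hpow_apply nb m s f).
Proof.
by move=> s_arcs; have := sum_hpow_apply_le_l2sq m f s_arcs (isT : arc_seq nb [::]);
  rewrite big_nil.
Qed.

Lemma sqrt_l2sq_hpow_apply_le m s (f : V * V -> R) :
  arc_seq nb s -> \sum_(b <- s) f b ^+ 2 <= 1 ->
  Num.sqrt (l2sq nb (hpow_apply nb m s f)) <= dmax%:R ^+ m.
Proof.
move=> s_arcs f_le1; have D_ge0 : 0 <= dmax%:R ^+ m :> R by rewrite exprn_ge0.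
rewrite -(ger0_norm D_ge0) -sqrtr_sqr ler_sqrt ?sqr_ge0 //.
apply: l2sq_le => t t_arcs; apply: le_trans (hpow_apply_schur m f s_arcs t_arcs) _.
by rewrite -[leRHS]mulr1 ler_wpM2l ?sqr_ge0.
Qed.

(* The Schur bound makes the set defining [hpow_norm m] bounded, so that its
   [sup] is a genuine upper bound. *)
Lemma hpow_norm_ub m s (f : V * V -> R) :
  arc_seq nb s -> \sum_(b <- s) f b ^+ 2 <= 1 ->
  Num.sqrt (l2sq nb (hpow_apply nb m s f)) <= hpow_norm nb R m.
Proof.
move=> s_arcs f_le1; apply: sup_upper_bound; last by exists s, f.
split; first by exists (Num.sqrt (l2sq nb (hpow_apply nb m s f))), s, f.
exists (dmax%:R ^+ m) => _ [s' [f' [s'_arcs f'_le1 ->]]].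
exact: sqrt_l2sq_hpow_apply_le.
Qed.

Lemma hpow_norm_ge0 m : 0 <= hpow_norm nb R m.
Proof.
have := @hpow_norm_ub m [::] (fun=> 0) isT; rewrite big_nil => /(_ ler01).
exact: le_trans (sqrtr_ge0 _).
Qed.

Lemma hpow_applyZ m s c (f : V * V -> R) a :
  hpow_apply nb m s (fun b => c * f b) a = c * hpow_apply nb m s f a.
Proof. by rewrite /hpow_apply mulr_sumr; apply: eq_bigr => b _; rewrite mulrCA. Qed.

Lemma hpow_apply_le_norm m s t (f : V * V -> R) : arc_seq nb s -> arc_seq nb t ->
  \sum_(a <- t) hpow_apply nb m s f a ^+ 2
  <= hpow_norm nb R m ^+ 2 * \sum_(b <- s) f b ^+ 2.
Proof.
move=> s_arcs t_arcs; set F := \sum_(b <- s) f b ^+ 2.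
have F_ge0 : 0 <= F by apply: sumr_ge0 => b _; exact: sqr_ge0.
have [F0|F_neq0] := eqVneq F 0.
  have f0 b : b \in s -> f b = 0.
    move: F0 => /eqP; rewrite psumr_eq0 => [/allP f0 /f0|e _]; last exact: sqr_ge0.
    by rewrite sqrf_eq0 => /eqP.
  rewrite F0 mulr0 big1 // => a _; rewrite /hpow_apply big1_seq ?expr0n // => b.
  by case/andP => _ /f0 ->; rewrite mulr0.
pose c := Num.sqrt F; have c_gt0 : 0 < c by rewrite sqrtr_gt0 lt_def F_neq0.
pose g b := f b / c.
have g_le1 : \sum_(b <- s) g b ^+ 2 <= 1.
  under eq_bigr do rewrite expr_div_n.
  by rewrite -mulr_suml sqr_sqrtr // divff.
have fg a : hpow_apply nb m s f a = c * hpow_apply nb m s g a.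
  by rewrite -hpow_applyZ; apply: eq_bigr => b _; rewrite /g [c * _]mulrC divfK ?gt_eqF.
under eq_bigr do rewrite fg exprMn.
rewrite -mulr_sumr sqr_sqrtr // mulrC ler_wpM2r //.
apply: le_trans (sum_hpow_apply_le_l2sq m g s_arcs t_arcs) _.
rewrite -(sqr_sqrtr (l2sq_hpow_apply_ge0 m g s_arcs)).
by rewrite lerXn2r ?nnegrE ?sqrtr_ge0 ?hpow_norm_ge0 ?hpow_norm_ub.
Qed.

Fixpoint reach (n : nat) (a : V * V) : seq (V * V) :=
  if n is n'.+1 then flatten [seq reach n' c | c <- out_arcs a.2] else [:: a].

Lemma hashimoto_pow_reach n a b : Hpow n a b != 0 -> b \in reach n a.
Proof.
elim: n a => [|n IH] a /=.
  have [->|] := eqVneq a b; first by rewrite mem_seq1.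
  by rewrite andbF eqxx.
move=> Hab; have /hasP[c ac Hcb] : has (fun c => Hpow n c b != 0) (out_arcs a.2).
  apply: contraNT Hab => /hasPn H0; apply/eqP; rewrite big_seq big1 // => c.
  by move=> /H0; rewrite negbK => /eqP ->; rewrite mulr0.
by apply/flatten_mapP; exists c => //; exact: IH.
Qed.

(* Since [hpow_apply] only sums over finite lists, composing powers of H needs
   an explicit finite list containing every arc [c] with [H^n c b != 0], [b \in s]. *)
Definition hashimoto_pow_support n (s : seq (V * V)) : seq (V * V) :=
  undup [seq c <- flatten [seq map rev_arc (reach n (rev_arc b)) | b <- s]
        | is_arc nb c].

Lemma mem_hashimoto_pow_support n s b c :
  b \in s -> Hpow n c b != 0 -> c \in hashimoto_pow_support n s.
Proof.
move=> bs Hcb; rewrite mem_undup mem_filter (hashimoto_pow_arc Hcb) /=.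
apply/flatten_mapP; exists b => //; apply/mapP; exists (rev_arc c).
  by apply: hashimoto_pow_reach; rewrite -hashimoto_pow_rev.
by rewrite rev_arcK.
Qed.

Lemma arc_seq_hashimoto_pow_support n s : arc_seq nb (hashimoto_pow_support n s).
Proof. by rewrite /arc_seq undup_uniq all_undup filter_all. Qed.

Lemma hashimoto_powD m n a b (l : seq (V * V)) : uniq l ->
  (forall c, Hpow n c b != 0 -> c \in l) ->
  Hpow (m + n) a b = \sum_(c <- l) Hpow m a c * Hpow n c b.
Proof.
move=> l_uniq l_supp; elim: m a => [|m IH] a.
  rewrite add0n /=; case a_arc: (is_arc nb a) => /=; last first.
    rewrite big1 => [|c _]; last by rewrite mul0r.
    by apply/eqP; apply: contraFT a_arc => /hashimoto_pow_arc.
  under eq_bigr do rewrite eq_sym.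
  by rewrite (@sum_seq_delta _ _ l (Hpow n ^~ b) a l_uniq (@l_supp a)).
rewrite addSn hashimoto_powS; under eq_bigr do rewrite IH mulr_sumr.
rewrite exchange_big /=; apply: eq_bigr => c _.
by rewrite mulr_suml; apply: eq_bigr => e _; rewrite mulrA.
Qed.

Lemma hpow_applyD m n s (f : V * V -> R) a : arc_seq nb s ->
  hpow_apply nb (m + n) s f a
  = hpow_apply nb m (hashimoto_pow_support n s) (hpow_apply nb n s f) a.
Proof.
case/andP => s_uniq _; rewrite /hpow_apply big_seq.
under eq_bigr => b bs.
  rewrite (@hashimoto_powD m n a b (hashimoto_pow_support n s)).
  - by rewrite mulr_suml; over.
  - by case/andP: (arc_seq_hashimoto_pow_support n s).
  - by move=> c; exact: mem_hashimoto_pow_support.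
rewrite -big_seq exchange_big /=; apply: eq_bigr => c _.
by rewrite mulr_sumr; apply: eq_bigr => b _; rewrite mulrA.
Qed.

Lemma hpow_normD_le m n :
  hpow_norm nb R (m + n) <= hpow_norm nb R m * hpow_norm nb R n.
Proof.
have NmNn_ge0 := mulr_ge0 (hpow_norm_ge0 m) (hpow_norm_ge0 n).
apply: ge_sup => [|_ [s [f [s_arcs f_le1 ->]]]].
  by exists (Num.sqrt (l2sq nb (hpow_apply nb (m + n) [::] (fun=> 0)))), [::], (fun=> 0);
    rewrite big_nil.
rewrite -(ger0_norm NmNn_ge0) -sqrtr_sqr ler_sqrt ?sqr_ge0 //.
apply: l2sq_le => t t_arcs; under eq_bigr do rewrite hpow_applyD //.
have supp_arcs := arc_seq_hashimoto_pow_support n s.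
apply: le_trans (hpow_apply_le_norm m _ supp_arcs t_arcs) _.
rewrite exprMn ler_wpM2l ?exprn_ge0 ?hpow_norm_ge0 //.
apply: le_trans (hpow_apply_le_norm n f s_arcs supp_arcs) _.
by rewrite -[leRHS]mulr1 ler_wpM2l ?exprn_ge0 ?hpow_norm_ge0.
Qed.

Lemma hashimoto_rho_ge0 : 0 <= hashimoto_rho nb R.
Proof. exact: limn_submul_root_ge0 hpow_norm_ge0 hpow_normD_le. Qed.

Lemma hpow_norm_le_geometric y : hashimoto_rho nb R < y ->
  exists2 M, 0 < M & forall m, hpow_norm nb R m <= M * y ^+ m.
Proof. exact: (submul_le_geometric hpow_norm_ge0 hpow_normD_le). Qed.

(** * Self-avoiding walks *)

Definition self_avoiding (v u : V) (s : seq V) : bool :=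
  (last v s == u) && uniq (v :: s).

Lemma last_arcP x y s : path (adj nb) x (y :: s) ->
  is_arc nb (last_arc x y s) /\ (last_arc x y s).2 = last y s.
Proof.
elim: s x y => [|z s IH] x y /=; first by rewrite andbT.
by case/andP => _; exact: IH.
Qed.

Lemma uniq_non_backtracking x y s : uniq [:: x, y & s] -> non_backtracking x y s.
Proof.
elim: s x y => [|z s IH] x y //= /andP[x_notin yzs_uniq].
rewrite IH ?andbT //; apply: contraNneq x_notin => <-.
by rewrite !inE eqxx orbT.
Qed.

Lemma self_avoiding_last_arc v u z s : z \in nb v -> path (adj nb) z s ->
  self_avoiding v u (z :: s) ->
  exists2 w, w \in nb u & non_backtracking v z s && (last_arc v z s == (w, u)).
Proof.
move=> vz zs /andP[/eqP last_u vzs_uniq].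
have /last_arcP[last_arc_arc last_arc_head] : path (adj nb) v (z :: s).
  by rewrite /= zs andbT.
rewrite /= in last_u; move: last_arc_arc.
rewrite (uniq_non_backtracking vzs_uniq) (surjective_pairing (last_arc v z s)).
rewrite last_arc_head last_u /is_arc /= adj_sym => w_u.
by exists (last_arc v z s).1.
Qed.

Lemma count_self_avoiding_le_hashimoto k v u :
  (count (self_avoiding v u) (walks_from k.+1 v))%:R
  <= \sum_(z <- nb v) \sum_(w <- nb u) Hpow k (v, z) (w, u).
Proof.
rewrite [walks_from _ _]/= count_flatten sumnE !big_map natr_sum.
rewrite big_seq [leRHS]big_seq; apply: ler_sum => z vz; rewrite count_map.
under eq_bigr do rewrite hashimoto_pow_count //.
rewrite -natr_sum ler_nat; apply: count_le_sum_count; first by case: nb_simple.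
move=> s; rewrite mem_walks_from => /andP[zs _].
exact: self_avoiding_last_arc.
Qed.

(* The block sum is the sum over out(v) of H^k applied to the indicator of in(u);
   apply Cauchy-Schwarz on out(v), then the norm of H^k. *)
Lemma hashimoto_pow_block_sum_le k v u :
  \sum_(z <- nb v) \sum_(w <- nb u) Hpow k (v, z) (w, u)
  <= dmax%:R * hpow_norm nb R k.
Proof.
pose g := hpow_apply nb k (in_arcs u) (fun=> 1 : R).
have -> : \sum_(z <- nb v) \sum_(w <- nb u) Hpow k (v, z) (w, u)
    = \sum_(a <- out_arcs v) g a.
  rewrite big_map; apply: eq_bigr => z _.
  by rewrite /g /hpow_apply big_map; apply: eq_bigr => w _; rewrite mulr1.
have g_ge0 : 0 <= \sum_(a <- out_arcs v) g a.
  by apply: sumr_ge0 => a _; apply: sumr_ge0 => b _; rewrite mulr1 hashimoto_pow_ge0.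
have N_ge0 := hpow_norm_ge0 k.
rewrite -(@ler_pXn2r _ 2) ?nnegrE ?mulr_ge0 //.
apply: le_trans (cauchy_schwarz_seq _ _) _.
have := hpow_apply_le_norm k (fun=> 1) (arc_seq_in_arcs u) (arc_seq_out_arcs v).
under [X in _ <= _ * X -> _]eq_bigr do rewrite expr1n.
rewrite -/g sumr1_seq => g_le.
have out_le : (size (out_arcs v))%:R <= dmax%:R :> R by rewrite ler_nat size_map.
have in_le : (size (in_arcs u))%:R <= dmax%:R :> R by rewrite ler_nat size_map.
apply: le_trans (ler_wpM2l (ler0n _ _) g_le) _.
rewrite exprMn mulrCA [leRHS]mulrC ler_wpM2l ?sqr_ge0 // expr2.
by apply: ler_pM; rewrite ?ler0n.
Qed.

Lemma count_self_avoiding_le k v u :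
  (count (self_avoiding v u) (walks_from k.+1 v))%:R <= dmax%:R * hpow_norm nb R k.
Proof.
exact: le_trans (count_self_avoiding_le_hashimoto k v u) (hashimoto_pow_block_sum_le k v u).
Qed.

(* For k > 0 the count is at most dmax M y^(k-1), and y^(k-1) p^(k+1) = (p y)^k p / y. *)
Lemma self_avoiding_term_le (p y M K : R) k v u :
  0 <= p <= 1 -> 0 < y -> 0 <= M -> (forall m, hpow_norm nb R m <= M * y ^+ m) ->
  1 <= K -> dmax%:R * M / y <= K ->
  (count (self_avoiding v u) (walks_from k v))%:R * p ^+ k.+1 <= K * (p * y) ^+ k.
Proof.
move=> /andP[p_ge0 p_le1] y_gt0 M_ge0 norm_le K_ge1 MK.
have y_ge0 := ltW y_gt0.
case: k => [|k].
  rewrite expr1 expr0 mulr1 (le_trans _ K_ge1) // mulr_ile1 ?ler0n //.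
  by rewrite /= addn0 lern1 leq_b1.
have count_le := le_trans (count_self_avoiding_le k v u)
  (ler_wpM2l (ler0n _ dmax) (norm_le k)).
apply: le_trans (ler_wpM2r (exprn_ge0 _ p_ge0) count_le) _.
have -> : dmax%:R * (M * y ^+ k) * p ^+ k.+2
    = dmax%:R * M / y * (p * y) ^+ k.+1 * p.
  by rewrite exprMn !exprS; field; rewrite gt_eqF.
have term_ge0 : 0 <= dmax%:R * M / y * (p * y) ^+ k.+1.
  by rewrite !mulr_ge0 ?ler0n ?invr_ge0 ?exprn_ge0 ?mulr_ge0.
apply: le_trans (ler_piMr term_ge0 p_le1) _.
by rewrite ler_wpM2r ?exprn_ge0 ?mulr_ge0.
Qed.

Lemma walk_rev u v s : walk nb v u s -> walk nb u v (rev (belast v s)).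
Proof.
case=> vs vs_u; split.
  by rewrite -vs_u rev_path; apply: sub_path vs => x y; rewrite /= adj_sym.
by case: s vs vs_u => [|z s] /= _ => [->|_]; rewrite ?rev_cons ?last_rcons.
Qed.

Lemma count_self_avoiding_eq0 u v n k : is_dist nb u v n -> (k < n)%N ->
  count (self_avoiding v u) (walks_from k v) = 0%N.
Proof.
case=> _ uv_min k_lt_n; apply/eqP; rewrite -leqn0 leqNgt -has_count.
apply/hasPn => s; rewrite mem_walks_from => /andP[vs /eqP size_s].
apply/negP => /andP[/eqP vs_u _].
have := uv_min _ (walk_rev (conj vs vs_u)).
by rewrite size_rev size_belast size_s leqNgt k_lt_n.
Qed.

End NonBacktrackingWalks.

(** * Site percolation *)

Section SitePercolation.
Local Open Scope ereal_scope.
Variables (V : choiceType) (nb : V -> seq V) (R : realType) (d : measure_display)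
  (Omega : measurableType d) (P : probability Omega R)
  (omega : V -> Omega -> bool) (p : R).
Hypothesis perc : site_percolation P omega p.

Definition all_open (s : seq V) : set Omega := [set w | all (omega^~ w) s].

Lemma measurable_all_open s : measurable (all_open s).
Proof.
elim: s => [|x s IH].
  by rewrite (_ : all_open [::] = setT) //; apply/seteqP; split.
rewrite (_ : all_open (x :: s) = [set w | omega x w] `&` all_open s).
  by apply: measurableI => //; case: perc.
by apply/seteqP; split => w /= /andP.
Qed.

Lemma probability_all_open s : uniq s -> P (all_open s) = (p ^+ size s)%:E.
Proof.
move=> s_uniq; case: perc => _ /(_ s (fun=> true) s_uniq).
rewrite big_const_seq count_predT iter_mulr_1 => <-; congr (P _).
by apply/seteqP; split => w /=; rewrite (eq_all (fun x => eqb_id (omega x w))).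
Qed.

Definition open_walk (v : V) (L : seq (seq V)) : set Omega :=
  [set w | has (fun s => all (omega^~ w) (v :: s)) L].

Lemma open_walk_nil v : open_walk v [::] = set0.
Proof. by apply/seteqP; split. Qed.

Lemma open_walk_cons v s L :
  open_walk v (s :: L) = all_open (v :: s) `|` open_walk v L.
Proof.
apply/seteqP; split => w; rewrite /open_walk /all_open /=; first by move/orP.
by case=> ->; rewrite ?orbT.
Qed.

Lemma measurable_open_walk v L : measurable (open_walk v L).
Proof.
elim: L => [|s L IH]; first by rewrite open_walk_nil.
by rewrite open_walk_cons; apply: measurableU => //; exact: measurable_all_open.
Qed.

Lemma open_walk_le v L : P (open_walk v L) <= \sum_(s <- L) P (all_open (v :: s)).
Proof.
elim: L => [|s L IH]; first by rewrite open_walk_nil measure0 big_nil.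
rewrite open_walk_cons big_cons; apply: le_trans (measureU2 _ _ _) _.
- exact: measurable_all_open.
- exact: measurable_open_walk.
by rewrite leeD2l.
Qed.

Lemma measurable_in_cluster u v : measurable (in_cluster nb omega u v).
Proof.
have -> : in_cluster nb omega u v
    = \bigcup_k open_walk v [seq s <- walks_from nb k v | last v s == u].
  apply/seteqP; split => w /=.
    case=> s [[vs su] s_open]; exists (size s) => //; apply/hasP; exists s => //.
    by rewrite mem_filter su eqxx mem_walks_from vs eqxx.
  case=> k _ /hasP[s]; rewrite mem_filter mem_walks_from.
  by case/andP => /eqP su /andP[vs _] s_open; exists s.
by apply: bigcup_measurable => k _; exact: measurable_open_walk.
Qed.

(* Loop erasure: shortening an open walk keeps it open. *)
Lemma in_cluster_sub_self_avoiding u v : in_cluster nb omega u v `<=`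
  \bigcup_k open_walk v [seq s <- walks_from nb k v | self_avoiding v u s].
Proof.
move=> w [s [[vs]]]; case: (shortenP vs) => s' vs' s'_uniq s'_sub s'_u s_open.
exists (size s') => //; apply/hasP; exists s'.
  by rewrite mem_filter /self_avoiding s'_u eqxx s'_uniq mem_walks_from vs' eqxx.
move: s_open => /= /andP[-> s_open]; apply/allP => x /s'_sub; exact: (allP s_open).
Qed.

Lemma open_self_avoiding_le k u v :
  P (open_walk v [seq s <- walks_from nb k v | self_avoiding v u s])
  <= ((count (self_avoiding v u) (walks_from nb k v))%:R * p ^+ k.+1)%:E.
Proof.
apply: le_trans (open_walk_le _ _) _.
rewrite big_seq (eq_bigr (fun=> (p ^+ k.+1)%:E)) => [|s]; last first.
  rewrite mem_filter mem_walks_from => /andP[/andP[_ vs_uniq] /andP[_ /eqP size_s]].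
  by rewrite probability_all_open //= size_s.
by rewrite -big_seq sumEFin big_const_seq count_predT iter_addr_0 size_filter mulr_natl.
Qed.

Lemma in_cluster_le_series u v : P (in_cluster nb omega u v) <=
  \sum_(k <oo) ((count (self_avoiding v u) (walks_from nb k v))%:R * p ^+ k.+1)%:E.
Proof.
have open_measurable k := measurable_open_walk v
  [seq s <- walks_from nb k v | self_avoiding v u s].
apply: le_trans (measure_sigma_subadditive P open_measurable
  (measurable_in_cluster u v) (@in_cluster_sub_self_avoiding u v)) _.
apply: lee_nneseries => [k _ _|k _]; first exact: measure_ge0.
exact: open_self_avoiding_le.
Qed.

End SitePercolation.

Theorem theorem2 (V : choiceType) (nb : V -> seq V) (dmax : nat)
  (R : realType) (d : measure_display) (Omega : measurableType d)
  (P : probability Omega R) (omega : V -> Omega -> bool) (p : R) :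
  simple_graph nb -> infinite_graph V -> connected_graph nb ->
  max_degree nb dmax ->
  0 <= p <= 1 -> site_percolation P omega p ->
  p * hashimoto_rho nb R < 1 ->
  exists rho' C : R,
    [/\ 0 <= rho' < 1,
        dmax%:R / (1 - p * hashimoto_rho nb R) <= C &
        forall (u v : V) (n : nat), is_dist nb u v n ->
          (P (in_cluster nb omega u v) <= (C * rho' ^+ n)%:E)%E].
Proof.
move=> nb_simple _ _ [deg_le _] p01 perc p_rho.
have /andP[p_ge0 _] := p01.
have [y rho_y py_lt1] := exists_gt_mul_lt1 p_ge0 p_rho.
have y_gt0 : 0 < y := le_lt_trans (hashimoto_rho_ge0 R nb_simple deg_le) rho_y.
have py_ge0 : 0 <= p * y by rewrite mulr_ge0 // ltW.
have [M M_gt0 norm_le] := hpow_norm_le_geometric nb_simple deg_le rho_y.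
pose K := Num.max 1 (dmax%:R * M / y).
have K_ge1 : 1 <= K by rewrite le_max lexx.
exists (p * y), (Num.max (dmax%:R / (1 - p * hashimoto_rho nb R)) (K / (1 - p * y))).
split; [by rewrite py_ge0 | by rewrite le_max lexx | move=> u v n uv_n].
apply: le_trans (in_cluster_le_series nb perc u v) _.
apply: le_trans (nneseries_geometric_tail_le (n := n) (a := K) (r := p * y) _ _ _ _ _) _.
- exact: le_trans ler01 K_ge1.
- by rewrite py_ge0.
- by move=> k; rewrite lee_fin mulr_ge0 ?exprn_ge0.
- by move=> k k_lt_n; rewrite (count_self_avoiding_eq0 nb_simple uv_n k_lt_n) mul0r.
- move=> k _; rewrite lee_fin.
  apply: (self_avoiding_term_le nb_simple deg_le k v u p01 y_gt0 (ltW M_gt0) norm_le K_ge1).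
  by rewrite le_max lexx orbT.
rewrite lee_fin mulrAC ler_wpM2r ?exprn_ge0 //.
by rewrite le_max lexx orbT.
Qed.
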